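(* Let $G$ be a proper interval graph with a proper vertex ordering $<$ and let $e,e'\in E(G)$. Then $\{e,e'\}$ is a uniquely restricted matching in $G$ if and only if $l(e),l(e')$ are distinct and nonadjacent or $r(e),r(e')$ are distinct and nonadjacent.
   Context: Graphs are finite, simple, undirected. A proper interval graph is a graph with an interval representation (closed real intervals, adjacency iff intersection for distinct vertices) in which no interval strictly contains another. An ordering $<$ of $V(G)$ is a proper vertex ordering if for all $u<v<w$, $uw\in E(G)$ implies $uv,vw\in E(G)$. For an edge $e=uv$, $l(e)=\min_<\{u,v\}$ and $r(e)=\max_<\{u,v\}$. A matching is a set of pairwise vertex-disjoint edges; it is uniquely restricted if no other matching of $G$ matches exactly the same vertex set. *)

From Stdlib Require Import Reals.
From mathcomp Require Import all_boot.
Set Implicit Arguments. Unset Strict Implicit. Unset Printing Implicit Defensive.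

Section Graphs.
Variable T : finType.

Definition simple_graph (e : rel T) : Prop := symmetric e /\ irreflexive e.

Definition proper_interval_graph (e : rel T) : Prop :=
  exists a b : T -> R,
    (forall v, Rle (a v) (b v)) /\
    (forall u v, u <> v ->
        (e u v <-> Rle (Rmax (a u) (a v)) (Rmin (b u) (b v)))) /\
    (forall u v, Rle (a v) (a u) -> Rle (b u) (b v) ->
        a u = a v /\ b u = b v).

(* A linear order on V(G) is encoded by an injective position map pos :
   u < v  iff  pos u < pos v. *)
Definition proper_vertex_ordering (e : rel T) (pos : T -> nat) : Prop :=
  injective pos /\
  forall u v w, pos u < pos v -> pos v < pos w -> e u w -> e u v /\ e v w.

Definition is_edge (e : rel T) (E : {set T}) : Prop :=
  exists u v, e u v /\ E = [set u; v].

Definition matching (e : rel T) (M : {set {set T}}) : Prop :=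
  (forall E, E \in M -> is_edge e E) /\
  (forall E F, E \in M -> F \in M -> E <> F -> [disjoint E & F]).

Definition uniquely_restricted_matching (e : rel T) (M : {set {set T}}) : Prop :=
  matching e M /\
  forall M', matching e M' -> cover M' = cover M -> M' = M.

End Graphs.

From mathcomp Require Import all_boot.
Set Implicit Arguments. Unset Strict Implicit. Unset Printing Implicit Defensive.

(* A matching {ab, cd} is uniquely restricted iff no alternating 4-cycle runs
   through a, b, c, d, i.e. neither ac, bd nor ad, bc are both edges: a matching
   with the same cover pairs a with b, c or d, and the last two choices force
   the complementary edge bd resp. bc.  In a proper vertex ordering the crossing
   pair l(e) r(e'), r(e) l(e') forces the parallel pair l(e) l(e'), r(e) r(e'),
   so only the latter has to be excluded. *)

Section TwoEdgeMatchings.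
Variables (T : finType) (e : rel T).
Hypotheses (e_sym : symmetric e) (e_irr : irreflexive e).

Lemma cover_set2 (A B : {set T}) : cover [set A; B] = A :|: B.
Proof. by rewrite /cover bigcup_setU !big_set1. Qed.

Lemma mem_cover (M : {set {set T}}) A x : A \in M -> x \in A -> x \in cover M.
Proof. by move=> MA Ax; apply/bigcupP; exists A. Qed.

Lemma disjoint_set2 (a b c d : T) :
  a != c -> a != d -> b != c -> b != d -> [disjoint [set a; b] & [set c; d]].
Proof.
move=> ac ad bc bd; rewrite disjoint_subset; apply/subsetP => x.
by rewrite !inE => /orP[]/eqP->; apply/norP.
Qed.

Lemma matching_set2 (a b c d : T) : e a b -> e c d ->
  a != c -> a != d -> b != c -> b != d ->
  matching e [set [set a; b]; [set c; d]].
Proof.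
move=> eab ecd ac ad bc bd; split.
  by move=> E; rewrite !inE => /orP[]/eqP->; [exists a, b | exists c, d].
move=> E F; rewrite !inE => /orP[]/eqP-> /orP[]/eqP-> // _.
  exact: disjoint_set2.
by rewrite disjoint_sym; apply: disjoint_set2.
Qed.

Lemma matching_set2_distinct (a b c d : T) :
  matching e [set [set a; b]; [set c; d]] -> [set a; b] <> [set c; d] ->
  [/\ a != c, a != d, b != c & b != d].
Proof.
move=> [_ disj] neq; have abcd := disj _ _ (setU11 _ _) (setU1r _ (set11 _)) neq.
have := disjointFr abcd (setU11 _ _); have := disjointFr abcd (setU1r _ (set11 _)).
by rewrite !inE => /norP[bc bd] /norP[ac ad].
Qed.

Lemma matching_edge (M : {set {set T}}) x y :
  matching e M -> [set x; y] \in M -> e x y.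
Proof.
move=> [edges _] /edges [p [q [epq /setP Exy]]].
have pq_xy : (p \in [set x; y]) && (q \in [set x; y]) by rewrite !Exy !inE !eqxx orbT.
have : x \in [set p; q] by rewrite -Exy !inE eqxx.
have : y \in [set p; q] by rewrite -Exy !inE eqxx orbT.
rewrite !inE => /orP[]/eqP yE /orP[]/eqP xE; subst x y; rewrite // 1?e_sym //.
all: by move: pq_xy epq; rewrite !inE !orbb => /andP[/eqP? /eqP?]; subst; rewrite e_irr.
Qed.

Lemma matching_block_eq (M : {set {set T}}) A B x :
  matching e M -> A \in M -> B \in M -> x \in A -> x \in B -> A = B.
Proof.
move=> [_ disj] MA MB xA xB; apply/eqP; apply: contraT => /eqP AB.
by rewrite (disjointFr (disj _ _ MA MB AB) xA) in xB.
Qed.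

Lemma matching_partner (M : {set {set T}}) x :
  matching e M -> x \in cover M -> exists y, [set x; y] \in M.
Proof.
move=> [edges _] /bigcupP[F MF xF]; have [p [q [_ Fpq]]] := edges _ MF.
move: xF MF; rewrite Fpq !inE => /orP[]/eqP->; first by exists q.
by exists p; rewrite setUC.
Qed.

Lemma matching_complement (M : {set {set T}}) x y z w :
  matching e M -> cover M \subset [set x; y] :|: [set z; w] ->
  [set x; y] \in M -> z \in cover M -> z \notin [set x; y] -> [set z; w] \in M.
Proof.
move=> match_M /subsetP sub Mxy zM zxy; have [p Mzp] := matching_partner match_M zM.
have pzxy : p \in [set z; p] by rewrite !inE eqxx orbT.
have p_xy : p \notin [set x; y].
  apply: contra zxy => pxy.
  by rewrite -(matching_block_eq match_M Mzp Mxy pzxy pxy) !inE eqxx.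
have := sub p (mem_cover Mzp pzxy); rewrite inE (negbTE p_xy) /=.
rewrite !inE => /orP[]/eqP pE; last by rewrite -pE.
by move: (matching_edge match_M Mzp); rewrite pE e_irr.
Qed.

Lemma matching_eq_set2 (M : {set {set T}}) A B :
  matching e M -> A \in M -> B \in M -> cover M \subset A :|: B ->
  M = [set A; B].
Proof.
move=> match_M MA MB /subsetP sub; apply/eqP; rewrite eqEsubset; apply/andP; split.
  apply/subsetP => E ME; have [p [q [_ Epq]]] := match_M.1 _ ME.
  have pE : p \in E by rewrite Epq !inE eqxx.
  have := sub p (mem_cover ME pE); rewrite inE => /orP[pA|pB].
    by rewrite (matching_block_eq match_M ME MA pE pA) !inE eqxx.
  by rewrite (matching_block_eq match_M ME MB pE pB) !inE eqxx orbT.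
by apply/subsetP => E; rewrite !inE => /orP[]/eqP->.
Qed.

Lemma uniquely_restricted2_no_alt_cycle (a b c d : T) : e a b -> e c d ->
  a != c -> a != d -> b != c -> b != d ->
  uniquely_restricted_matching e [set [set a; b]; [set c; d]] ->
  ~ (e a c /\ e b d).
Proof.
move=> eab ecd ac ad bc bd [_ ur] [eac ebd].
have ab : a != b by apply: contraTneq eab => ->; rewrite e_irr.
have cd : c != d by apply: contraTneq ecd => ->; rewrite e_irr.
have cb : c != b by rewrite eq_sym.
have := ur _ (matching_set2 eac ebd ab ad cb cd).
rewrite !cover_set2 setUACA => /(_ erefl) M_alt.
have : [set a; c] \in [set [set a; b]; [set c; d]] by rewrite -M_alt !inE eqxx.
rewrite !inE => /orP[]/eqP/setP.
  by move/(_ c); rewrite !inE eqxx orbT ![c == _]eq_sym (negbTE ac) (negbTE bc).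
by move/(_ a); rewrite !inE eqxx (negbTE ac) (negbTE ad).
Qed.

Lemma uniquely_restricted2P (a b c d : T) : e a b -> e c d ->
  a != c -> a != d -> b != c -> b != d ->
  uniquely_restricted_matching e [set [set a; b]; [set c; d]] <->
  ~ (e a c /\ e b d) /\ ~ (e a d /\ e b c).
Proof.
move=> eab ecd ac ad bc bd; split=> [ur | [no_ac no_ad]].
  split; first exact: uniquely_restricted2_no_alt_cycle ur.
  rewrite [[set c; d]]setUC in ur.
  by apply: uniquely_restricted2_no_alt_cycle ur; rewrite // e_sym.
split=> [|M' match_M' cov']; first exact: matching_set2.
have ab : a != b by apply: contraTneq eab => ->; rewrite e_irr.
rewrite !cover_set2 in cov'.
have aM' : a \in cover M' by rewrite cov' !inE eqxx.
have [p M'ap] := matching_partner match_M' aM'.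
have : p \in cover M' by apply: mem_cover M'ap _; rewrite !inE eqxx orbT.
rewrite cov' !inE -!orbA => /or4P[]/eqP pE; move: M'ap; rewrite pE => M'ap.
- by move: (matching_edge match_M' M'ap); rewrite e_irr.
- have M'cd : [set c; d] \in M'.
    apply: matching_complement M'ap _ _; rewrite ?cov' //.
    - by rewrite !inE eqxx !orbT.
    - by rewrite !inE negb_or eq_sym ac eq_sym bc.
  by apply: matching_eq_set2; rewrite ?cov'.
- case: no_ac; split; first exact: matching_edge match_M' M'ap.
  apply: matching_edge match_M' (matching_complement match_M' _ M'ap _ _).
  + by rewrite cov' setUACA.
  + by rewrite cov' !inE eqxx orbT.
  + by rewrite !inE negb_or eq_sym ab bc.
- case: no_ad; split; first exact: matching_edge match_M' M'ap.
  apply: matching_edge match_M' (matching_complement match_M' _ M'ap _ _).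
  + by rewrite cov' [[set c; d]]setUC setUACA.
  + by rewrite cov' !inE eqxx orbT.
  + by rewrite !inE negb_or eq_sym ab bd.
Qed.

End TwoEdgeMatchings.

Section ProperVertexOrdering.
Variables (T : finType) (e : rel T) (pos : T -> nat).
Hypotheses (e_sym : symmetric e) (ord : proper_vertex_ordering e pos).

Lemma pvo_left_ends_adj (a b c d : T) : e a d -> e b c ->
  pos a < pos c -> pos b < pos d -> a != b -> e a b.
Proof.
have [pos_inj between] := ord.
move=> ead ebc ac bd neq; case: (ltngtP (pos a) (pos b)) => [ab|ba|/pos_inj abE].
- exact: (between _ _ _ ab bd ead).1.
- by rewrite e_sym; apply: (between _ _ _ ba ac ebc).1.
- by rewrite abE eqxx in neq.
Qed.

Lemma pvo_right_ends_adj (a b c d : T) : e a d -> e b c ->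
  pos a < pos c -> pos b < pos d -> c != d -> e c d.
Proof.
have [pos_inj between] := ord.
move=> ead ebc ac bd neq; case: (ltngtP (pos c) (pos d)) => [cd|dc|/pos_inj cdE].
- exact: (between _ _ _ ac cd ead).2.
- by rewrite e_sym; apply: (between _ _ _ bd dc ebc).2.
- by rewrite cdE eqxx in neq.
Qed.

End ProperVertexOrdering.

Theorem lemma3 (T : finType) (e : rel T) (pos : T -> nat)
  (Hs : simple_graph e) (Hpi : proper_interval_graph e)
  (Hord : proper_vertex_ordering e pos)
  (u1 v1 u2 v2 : T)
  (He1 : e u1 v1) (Hlr1 : pos u1 < pos v1)
  (He2 : e u2 v2) (Hlr2 : pos u2 < pos v2)
  (Hne : [set u1; v1] <> [set u2; v2]) :
  uniquely_restricted_matching e [set [set u1; v1]; [set u2; v2]] <->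
  ((u1 <> u2 /\ ~~ e u1 u2) \/ (v1 <> v2 /\ ~~ e v1 v2)).
Proof.
have [sym irr] := Hs.
split=> [ur | H].
  have [u1u2 u1v2 v1u2 v1v2] := matching_set2_distinct ur.1 Hne.
  have [no_par _] := (uniquely_restricted2P sym irr He1 He2 u1u2 u1v2 v1u2 v1v2).1 ur.
  case: (boolP (e u1 u2)) => [uu | nuu]; last by left; split=> //; apply/eqP.
  by right; split; [apply/eqP | apply/negP => vv; apply: no_par].
have no_par : ~ (e u1 u2 /\ e v1 v2) by case=> uu vv; case: H => -[_]; rewrite ?uu ?vv.
have u1v2 : u1 != v2.
  by apply: contra_not_neq no_par => u1E; subst u1; split; rewrite // sym.
have v1u2 : v1 != u2 by apply: contra_not_neq no_par => v1E; subst v1.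
have u1u2 : u1 != u2.
  apply/eqP => u1E; subst u2; case: H => [[]//|[/eqP v1v2 /negP]]; apply.
  exact: pvo_right_ends_adj He2 He1 Hlr1 Hlr2 v1v2.
have v1v2 : v1 != v2.
  apply/eqP => v1E; subst v2; case: H => [[_ /negP]|[]//]; apply.
  exact: pvo_left_ends_adj He1 He2 Hlr1 Hlr2 u1u2.
apply/(uniquely_restricted2P sym irr He1 He2 u1u2 u1v2 v1u2 v1v2).
split=> // -[eu1v2 ev1u2].
have eu2v1 : e u2 v1 by rewrite sym.
apply: no_par; split.
  exact: pvo_left_ends_adj eu1v2 eu2v1 Hlr1 Hlr2 u1u2.
exact: pvo_right_ends_adj eu1v2 eu2v1 Hlr1 Hlr2 v1v2.
Qed.
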